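(* Let $\kappa$ be a regular uncountable cardinal and $I$ an ideal on $\kappa$. Then $I$ is subpleasant if and only if $I$ is subnormal.
   Context: An ideal on $\kappa$ is a family of subsets of $\kappa$ closed under subsets and finite unions, which is $<\kappa$-complete and contains all singletons. It is proper if $\kappa\notin I$. For $A\subseteq\kappa$ and $X_\alpha\subseteq\kappa$, $\bigtriangledown_{\alpha\in A}X_\alpha=\{\xi<\kappa:\exists\alpha<\xi\,(\alpha\in A\wedge \xi\in X_\alpha)\}$. $I$ is normal if $X_\alpha\in I$ for all $\alpha<\kappa$ implies $\bigtriangledown_{\alpha<\kappa}X_\alpha\in I$. $I$ is pleasant if whenever $A\in I$ and $X_\alpha\in I$ for all $\alpha$, then $\bigtriangledown_{\alpha\in A}X_\alpha\in I$. $I$ is subnormal if it is contained in a proper normal ideal on $\kappa$, and subpleasant if it is contained in a proper pleasant ideal on $\kappa$. *)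

(* pure set theory over a type carrying a well-order.
   kappa is modelled as a type T with a strict well-order lt (its elements are
   the ordinals < kappa); subsets of kappa are predicates T -> Prop. *)
From Stdlib Require Import Relations Wellfounded.

Set Implicit Arguments.

Definition injective_fun (A B : Type) (f : A -> B) : Prop :=
  forall x y, f x = f y -> x = y.

Definition card_le (A B : Type) : Prop := exists f : A -> B, injective_fun f.

Definition card_lt (A B : Type) : Prop := card_le A B /\ ~ card_le B A.

Definition strict_well_order (T : Type) (lt : T -> T -> Prop) : Prop :=
  well_founded lt /\ transitive T lt /\
  (forall x y : T, lt x y \/ x = y \/ lt y x).

(* (T, lt) is (the order type of) a cardinal kappa: every proper initial segment
   has cardinality strictly below |T|. *)
Definition is_cardinal (T : Type) (lt : T -> T -> Prop) : Prop :=
  strict_well_order lt /\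
  forall a : T, card_lt {b : T | lt b a} T.

Definition is_regular (T : Type) (lt : T -> T -> Prop) : Prop :=
  forall X : T -> Prop, card_lt {x : T | X x} T ->
    exists a : T, forall x, X x -> lt x a.

Definition uncountable (T : Type) : Prop := ~ card_le T nat.

Definition regular_uncountable_cardinal (T : Type) (lt : T -> T -> Prop) : Prop :=
  is_cardinal lt /\ is_regular lt /\ uncountable T.

Definition is_ideal (T : Type) (I : (T -> Prop) -> Prop) : Prop :=
  (forall X Y : T -> Prop, I X -> (forall x, Y x -> X x) -> I Y) /\
  (forall X Y : T -> Prop, I X -> I Y -> I (fun x => X x \/ Y x)) /\
  (forall (J : Type) (F : J -> T -> Prop), card_lt J T ->
     (forall j, I (F j)) -> I (fun x => exists j, F j x)) /\
  (forall a : T, I (fun x => x = a)).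

Definition proper_ideal (T : Type) (I : (T -> Prop) -> Prop) : Prop :=
  ~ I (fun _ => True).

Definition diag_union (T : Type) (lt : T -> T -> Prop)
  (A : T -> Prop) (X : T -> T -> Prop) : T -> Prop :=
  fun xi => exists alpha, lt alpha xi /\ A alpha /\ X alpha xi.

Definition normal_ideal (T : Type) (lt : T -> T -> Prop)
  (I : (T -> Prop) -> Prop) : Prop :=
  forall X : T -> T -> Prop, (forall a, I (X a)) ->
    I (diag_union lt (fun _ => True) X).

Definition pleasant_ideal (T : Type) (lt : T -> T -> Prop)
  (I : (T -> Prop) -> Prop) : Prop :=
  forall (A : T -> Prop) (X : T -> T -> Prop), I A -> (forall a, I (X a)) ->
    I (diag_union lt A X).

Definition ideal_incl (T : Type) (I J : (T -> Prop) -> Prop) : Prop :=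
  forall X, I X -> J X.

Definition subnormal (T : Type) (lt : T -> T -> Prop)
  (I : (T -> Prop) -> Prop) : Prop :=
  exists J, is_ideal J /\ proper_ideal J /\ normal_ideal lt J /\ ideal_incl I J.

Definition subpleasant (T : Type) (lt : T -> T -> Prop)
  (I : (T -> Prop) -> Prop) : Prop :=
  exists J, is_ideal J /\ proper_ideal J /\ pleasant_ideal lt J /\ ideal_incl I J.

(* A pleasant ideal J lies in its normal closure
   N = { Y | Y <= Z u diag_a X_a for some Z and X_a in J },
   which is always a normal ideal; the point is properness.  If kappa = Z u diag_a X_a,
   pleasantness lets us close Z under A |-> A u diag_(a in A) X_a inside J in omega
   steps (omega < kappa by uncountability).  By well-founded induction the resulting
   W contains every ordinal, so kappa = W would lie in J.  Conversely, a normal ideal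
   is pleasant because diag_(a in A) X_a is a subset of diag_a X_a. *)

From Stdlib Require Import Classical IndefiniteDescription List PeanoNat Lia.

Section Countable.
Context {T : Type}.

Lemma card_le_nat_of_list_cover (l : list T) :
  (forall x, In x l) -> card_le T nat.
Proof.
  intro Hl.
  destruct (functional_choice (fun x k => nth_error l k = Some x))
    as [f Hf].
  { intro x. exact (In_nth_error l x (Hl x)). }
  exists f. intros x y Hxy.
  assert (Hsome : Some x = Some y) by (rewrite <- (Hf x), <- (Hf y), Hxy; reflexivity).
  injection Hsome. trivial.
Qed.

Lemma card_le_nat_of_uncountable : uncountable T -> card_le nat T.
Proof.
  intro Hu.
  assert (Hfresh : forall l : list T, exists x, ~ In x l).
  { intro l. apply NNPP. intro Hcover. apply Hu.
    apply (card_le_nat_of_list_cover l). intro x.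
    apply NNPP. intro Hx. apply Hcover. exists x. exact Hx. }
  destruct (functional_choice (fun l x => ~ In x l) Hfresh) as [g Hg].
  set (L := fix L (n : nat) : list T :=
         match n with 0 => nil | S n => g (L n) :: L n end).
  assert (HL : forall m n, m < n -> In (g (L m)) (L n)).
  { intros m n. induction n as [|n IH]; intro Hmn; [lia|].
    simpl. destruct (Nat.eq_dec m n) as [->|Hne]; [left; reflexivity|].
    right. apply IH. lia. }
  exists (fun n => g (L n)). intros m n Hmn.
  destruct (Nat.lt_total m n) as [Hlt|[Heq|Hlt]]; trivial; exfalso.
  - apply (Hg (L n)). rewrite <- Hmn. exact (HL m n Hlt).
  - apply (Hg (L m)). rewrite Hmn. exact (HL n m Hlt).
Qed.

Lemma card_lt_nat_of_uncountable : uncountable T -> card_lt nat T.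
Proof. intro Hu. split; [exact (card_le_nat_of_uncountable Hu) | exact Hu]. Qed.

End Countable.

Section NormalClosure.
Context {T : Type}.
Variable lt : T -> T -> Prop.
Variable J : (T -> Prop) -> Prop.
Hypothesis HJ : is_ideal J.

Definition normal_closure (Y : T -> Prop) : Prop :=
  exists (X : T -> T -> Prop) (Z : T -> Prop),
    (forall a, J (X a)) /\ J Z /\
    forall xi, Y xi -> Z xi \/ diag_union lt (fun _ => True) X xi.

Lemma ideal_empty : inhabited T -> J (fun _ => False).
Proof.
  intros [t]. destruct HJ as [Jsub [_ [_ Jsing]]].
  apply (Jsub _ _ (Jsing t)). intros _ [].
Qed.

Lemma normal_closure_incl : ideal_incl J normal_closure.
Proof.
  destruct HJ as [_ [_ [_ Jsing]]].
  intros Y HY. exists (fun a x => x = a), Y. auto.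
Qed.

Lemma normal_closure_ideal : is_ideal normal_closure.
Proof.
  destruct HJ as [_ [Jun [Jcomp Jsing]]].
  split; [|split; [|split]].
  - intros Y Y' [X [Z [HX [HZ HY]]]] Hsub. exists X, Z. auto.
  - intros Y1 Y2 [X1 [Z1 [HX1 [HZ1 H1]]]] [X2 [Z2 [HX2 [HZ2 H2]]]].
    exists (fun a x => X1 a x \/ X2 a x), (fun x => Z1 x \/ Z2 x).
    split; [intro a; apply Jun; auto|]. split; [apply Jun; auto|].
    intros xi [Hxi|Hxi]; [destruct (H1 xi Hxi) as [Hz|[a [Ha [_ Hx]]]]
                         |destruct (H2 xi Hxi) as [Hz|[a [Ha [_ Hx]]]]];
      solve [left; auto | right; exists a; auto].
  - intros K F HK HF.
    destruct (functional_choice (fun j (p : (T -> T -> Prop) * (T -> Prop)) =>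
        (forall a, J (fst p a)) /\ J (snd p) /\
        forall xi, F j xi -> snd p xi \/ diag_union lt (fun _ => True) (fst p) xi))
      as [p Hp].
    { intro j. destruct (HF j) as [X [Z HXZ]]. exists (X, Z). exact HXZ. }
    exists (fun a x => exists j, fst (p j) a x), (fun x => exists j, snd (p j) x).
    split; [intro a; apply (Jcomp K (fun j => fst (p j) a) HK); intro j; apply Hp|].
    split; [apply (Jcomp K (fun j => snd (p j)) HK); intro j; apply Hp|].
    intros xi [j Hj]. destruct (Hp j) as [_ [_ Hcov]].
    destruct (Hcov xi Hj) as [Hz|[a [Ha [_ Hx]]]];
      [left; exists j; exact Hz | right; exists a; split; [|split]; eauto].
  - intro a. apply normal_closure_incl, Jsing.
Qed.

Lemma normal_closure_choice (Y : T -> T -> Prop) :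
  (forall a, normal_closure (Y a)) ->
  exists (X : T -> T -> T -> Prop) (Z : T -> T -> Prop),
    (forall a b, J (X a b)) /\ (forall a, J (Z a)) /\
    forall a xi, Y a xi -> Z a xi \/ diag_union lt (fun _ => True) (X a) xi.
Proof.
  intro HY.
  destruct (functional_choice (fun a (p : (T -> T -> Prop) * (T -> Prop)) =>
      (forall b, J (fst p b)) /\ J (snd p) /\
      forall xi, Y a xi -> snd p xi \/ diag_union lt (fun _ => True) (fst p) xi))
    as [p Hp].
  { intro a. destruct (HY a) as [X [Z HXZ]]. exists (X, Z). exact HXZ. }
  exists (fun a => fst (p a)), (fun a => snd (p a)).
  split; [intro a; apply Hp|]. split; [intro a; apply Hp|].
  intro a. apply Hp.
Qed.

(* Normality needs lt to be total and every initial segment to be small, so that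
   the set X_a(b) can be charged to the larger of a and b. *)
Lemma normal_closure_normal :
  (forall x y, lt x y \/ x = y \/ lt y x) ->
  (forall a, card_lt {b | lt b a} T) -> inhabited T ->
  normal_ideal lt normal_closure.
Proof.
  intros Htotal Hseg Hinh Y HY.
  destruct HJ as [_ [Jun [Jcomp _]]].
  destruct (normal_closure_choice Y HY) as [X [Z [HX [HZ HYcov]]]].
  set (W := fun g x => Z g x \/ X g g x \/
              (exists a : {b | lt b g}, X (proj1_sig a) g x) \/
              (exists b : {b | lt b g}, X g (proj1_sig b) x)).
  exists W, (fun _ => False).
  split.
  { intro g. apply Jun; [exact (HZ g)|]. apply Jun; [exact (HX g g)|].
    apply Jun.
    - exact (Jcomp _ (fun a : {b | lt b g} => X (proj1_sig a) g) (Hseg g)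
               (fun a => HX _ _)).
    - exact (Jcomp _ (fun b : {b | lt b g} => X g (proj1_sig b)) (Hseg g)
               (fun b => HX _ _)). }
  split; [exact (ideal_empty Hinh)|].
  intros xi [a [Ha [_ Hxi]]]. right.
  destruct (HYcov a xi Hxi) as [Hz|[b [Hb [_ Hx]]]].
  - exists a. unfold W. tauto.
  - destruct (Htotal a b) as [Hab|[<-|Hba]].
    + exists b. split; [exact Hb|]. split; [exact Logic.I|].
      right; right; left. exists (exist _ a Hab). exact Hx.
    + exists a. unfold W. tauto.
    + exists a. split; [exact Ha|]. split; [exact Logic.I|].
      right; right; right. exists (exist _ b Hba). exact Hx.
Qed.

Lemma pleasant_diag_closed_superset (Z : T -> Prop) (X : T -> T -> Prop) :
  pleasant_ideal lt J -> card_lt nat T -> J Z -> (forall a, J (X a)) ->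
  exists W, J W /\ (forall x, Z x -> W x) /\
            (forall x, diag_union lt W X x -> W x).
Proof.
  intros Hpl Hnat HZ HX. destruct HJ as [_ [Jun [Jcomp _]]].
  set (A := fix A (n : nat) : T -> Prop :=
         match n with
         | 0 => Z
         | S n => fun x => A n x \/ diag_union lt (A n) X x
         end).
  assert (HA : forall n, J (A n)).
  { induction n as [|n IH]; [exact HZ|]. apply Jun; [exact IH|]. exact (Hpl _ _ IH HX). }
  exists (fun x => exists n, A n x).
  split; [exact (Jcomp nat A Hnat HA)|]. split; [intros x Hx; exists 0; exact Hx|].
  intros x [a [Hax [[n Han] Hx]]]. exists (S n). right. exists a. auto.
Qed.

Lemma diag_closed_superset_full (Z W : T -> Prop) (X : T -> T -> Prop) :
  well_founded lt ->
  (forall x, Z x \/ diag_union lt (fun _ => True) X x) ->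
  (forall x, Z x -> W x) -> (forall x, diag_union lt W X x -> W x) ->
  forall x, W x.
Proof.
  intros Hwf Hcov HZW HW x. induction (Hwf x) as [x _ IH].
  destruct (Hcov x) as [Hz|[a [Hax [_ Hx]]]]; [exact (HZW x Hz)|].
  apply HW. exists a. auto.
Qed.

Lemma normal_closure_proper :
  well_founded lt -> card_lt nat T -> pleasant_ideal lt J -> proper_ideal J ->
  proper_ideal normal_closure.
Proof.
  intros Hwf Hnat Hpl Hprop [X [Z [HX [HZ Hcov]]]].
  destruct (pleasant_diag_closed_superset Z X Hpl Hnat HZ HX)
    as [W [HW [HZW HWclosed]]].
  apply Hprop. destruct HJ as [Jsub _]. apply (Jsub W _ HW).
  intros x _. exact (diag_closed_superset_full Z W X Hwf
                       (fun x => Hcov x Logic.I) HZW HWclosed x).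
Qed.

Lemma pleasant_of_normal : normal_ideal lt J -> pleasant_ideal lt J.
Proof.
  intros Hn A X _ HX. destruct HJ as [Jsub _].
  apply (Jsub _ _ (Hn X HX)). intros xi [a [Ha [_ Hx]]]. exists a. auto.
Qed.

End NormalClosure.

Theorem corollary2p3 (T : Type) (lt : T -> T -> Prop)
  (Hk : regular_uncountable_cardinal lt)
  (I : (T -> Prop) -> Prop) (HI : is_ideal I) :
  subpleasant lt I <-> subnormal lt I.
Proof.
  destruct Hk as [[[Hwf [_ Htotal]] Hseg] [_ Hu]].
  pose proof (card_lt_nat_of_uncountable Hu) as Hnat.
  assert (Hinh : inhabited T) by (destruct Hnat as [[f _] _]; exact (inhabits (f 0))).
  split.
  - intros [J [HJ [Hprop [Hpl HIJ]]]].
    exists (normal_closure lt J). split; [|split; [|split]].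
    + exact (normal_closure_ideal lt J HJ).
    + exact (normal_closure_proper lt J HJ Hwf Hnat Hpl Hprop).
    + exact (normal_closure_normal lt J HJ Htotal Hseg Hinh).
    + intros Y HY. exact (normal_closure_incl lt J HJ Y (HIJ Y HY)).
  - intros [J [HJ [Hprop [Hn HIJ]]]].
    exists J. split; [exact HJ|]. split; [exact Hprop|].
    split; [exact (pleasant_of_normal lt J HJ Hn) | exact HIJ].
Qed.
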